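(* Fix $0<\epsilon<1$. Let $A\in\mathbb{R}^{m\times n}$ have i.i.d. $\mathcal{N}(0,1/m)$ entries with rows $\{a_\ell\}_{\ell=1}^m$, and let $Z$ be a $k$-dimensional subspace of $\mathbb{R}^n$. Let $E_{Z,A}$ be the event that there exists a set $Z_0\subset Z$ such that: each $z_0\in Z_0$ satisfies $\langle a_\ell,z_0\rangle\neq0$ for all $\ell\in[m]$; $|Z_0|\leqslant10m^{2k}$; and for all $z\in Z$ with $\|z\|=1$ there exists $z_0\in Z_0$ with $\|z-z_0\|\leqslant\epsilon$. There are positive absolute constants $C_2,c$ and a constant $\hat C$ depending polynomially on $\epsilon^{-1}$ such that if $m\geqslant\hat Ck$, then $\mathbb{P}(E_{Z,A})\geqslant1-C_2\exp(-c\epsilon m)$. *)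

From HB Require Import structures.
From mathcomp Require Import all_boot all_order all_algebra.
From mathcomp Require Import all_classical all_reals all_analysis.
From mathcomp Require Import normal_distribution.

Set Implicit Arguments.
Unset Strict Implicit.
Unset Printing Implicit Defensive.

Import Order.TTheory GRing.Theory Num.Theory.
Local Open Scope classical_set_scope.
Local Open Scope ring_scope.

Definition enorm {R : realType} {n : nat} (v : 'rV[R]_n) : R :=
  Num.sqrt (\sum_(j < n) v 0 j ^+ 2).

(* The entries of a random matrix (A_{lj}) : Omega -> R are mutually
   independent: product rule for all events {A_lj \in B_lj}, B_lj Borel
   (choosing B_lj = setT covers every subfamily). *)
Definition mutually_independent_entries {R : realType} {d : measure_display}
  {T : measurableType d} (P : probability T R) (m n : nat)
  (A : 'I_m -> 'I_n -> T -> R) : Prop :=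
  forall B : 'I_m -> 'I_n -> set R,
    (forall l j, measurable (B l j)) ->
    P [set w | forall l j, B l j (A l j w)] =
    (\prod_(l < m) \prod_(j < n) P (A l j @^-1` B l j))%E.

(* Each entry A_lj has law N(0, 1/m) (standard deviation sqrt(1/m)). *)
Definition gaussian_entries {R : realType} {d : measure_display}
  {T : measurableType d} (P : probability T R) (m n : nat)
  (A : 'I_m -> 'I_n -> T -> R) : Prop :=
  forall l j, measurable_fun [set: T] (A l j) /\
    forall B : set R, measurable B ->
      P (A l j @^-1` B) = normal_prob 0 (Num.sqrt (m%:R^-1)) B.

Definition mat_at {R : realType} {T : Type} (m n : nat)
  (A : 'I_m -> 'I_n -> T -> R) (w : T) : 'M[R]_(m, n) :=
  \matrix_(l < m, j < n) A l j w.

Definition event_EZA {R : realType} {T : Type} (m n k : nat) (eps : R)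
  (Z : {vspace 'rV[R]_n}) (A : 'I_m -> 'I_n -> T -> R) : set T :=
  [set w | exists Z0 : seq 'rV[R]_n,
     [/\ forall z0, z0 \in Z0 ->
           (z0 \in Z) /\
           (forall l : 'I_m, \sum_(j < n) mat_at A w l j * z0 0 j != 0),
         uniq Z0 /\ (size Z0 <= 10 * m ^ (2 * k))%N
       & forall z, z \in Z -> enorm z = 1 ->
           exists2 z0, z0 \in Z0 & enorm (z - z0) <= eps]].

(* Almost surely no row of A is orthogonal to a fixed nonzero v in Z: a
   nontrivial linear combination of independent random variables with bounded
   densities vanishes with probability zero, since up to small tails the
   hyperplane is covered by product boxes of total probability O(1/N).  On
   that event the net is built deterministically: the grid of mesh
   eps/(2k) in the coordinates of an orthonormal basis of Z has at most
   m^(2k) points and approximates the unit sphere of Z within eps/2, and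
   translating the whole grid by a small enough multiple of v pushes all its
   points off the finitely many hyperplanes a_l^perp while keeping them
   within eps.  Hence E_{Z,A} holds almost surely. *)

From HB Require Import structures.
From mathcomp Require Import all_boot all_order all_algebra.
From mathcomp Require Import all_classical all_reals all_analysis.
From mathcomp Require Import normal_distribution measurable_realfun.
From mathcomp Require Import ring lra.

Set Implicit Arguments.
Unset Strict Implicit.
Unset Printing Implicit Defensive.
Import Order.TTheory GRing.Theory Num.Theory.
Local Open Scope classical_set_scope.
Local Open Scope ring_scope.

Section Euclid.
Variables (R : realType) (n : nat).
Implicit Types (u v w x y : 'rV[R]_n).

Definition dot u v : R := \sum_(j < n) u 0 j * v 0 j.

Lemma dotC u v : dot u v = dot v u.
Proof. by apply: eq_bigr => j _; rewrite mulrC. Qed.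

Lemma dot0l v : dot 0 v = 0.
Proof. by rewrite /dot big1 // => j _; rewrite mxE mul0r. Qed.

Lemma dotDl u w v : dot (u + w) v = dot u v + dot w v.
Proof. by rewrite /dot -big_split; apply: eq_bigr => j _; rewrite mxE mulrDl. Qed.

Lemma dotZl a u v : dot (a *: u) v = a * dot u v.
Proof. by rewrite /dot mulr_sumr; apply: eq_bigr => j _; rewrite mxE mulrA. Qed.

Lemma dotBl u w v : dot (u - w) v = dot u v - dot w v.
Proof. by rewrite dotDl -scaleN1r dotZl mulN1r. Qed.

Lemma dot_suml (I : Type) (r : seq I) (P : pred I) (F : I -> 'rV[R]_n) v :
  dot (\sum_(i <- r | P i) F i) v = \sum_(i <- r | P i) dot (F i) v.
Proof. exact: (big_morph (dot^~ v) (fun u w => dotDl u w v) (dot0l v)). Qed.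

Lemma dotDr u w v : dot v (u + w) = dot v u + dot v w.
Proof. by rewrite dotC dotDl !(dotC v). Qed.

Lemma dotZr a u v : dot v (a *: u) = a * dot v u.
Proof. by rewrite dotC dotZl dotC. Qed.

Lemma dot_ge0 u : 0 <= dot u u.
Proof. by apply: sumr_ge0 => j _; rewrite -expr2 sqr_ge0. Qed.

Lemma dot_eq0 u : (dot u u == 0) = (u == 0).
Proof.
apply/idP/eqP => [/eqP u0|->]; last by rewrite dot0l.
apply/rowP => j; rewrite mxE; apply/eqP; rewrite -[_ == 0]orbb -mulf_eq0.
by apply/eqP; move/psumr_eq0P: u0; apply=> // i _; rewrite -expr2 sqr_ge0.
Qed.

Lemma enormE u : enorm u = Num.sqrt (dot u u).
Proof. by congr Num.sqrt; apply: eq_bigr => j _; rewrite expr2. Qed.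

Lemma dot_subr_le x y : dot (x - y) (x - y) <= 2 * dot x x + 2 * dot y y.
Proof.
rewrite /dot !mulr_sumr -big_split /=; apply: ler_sum => j _.
rewrite !mxE; have := sqr_ge0 (x 0 j + y 0 j); nra.
Qed.

Definition orthonormal_upto k (e : nat -> 'rV[R]_n) :=
  forall i j, (i < k)%N -> (j < k)%N -> dot (e i) (e j) = (i == j)%:R.

Definition proj k (e : nat -> 'rV[R]_n) x := \sum_(i < k) dot x (e i) *: e i.

Section Orthonormal.
Variables (k : nat) (e : nat -> 'rV[R]_n).
Hypothesis e_on : orthonormal_upto k e.

Lemma dot_lincomb_basis (c : 'I_k -> R) (j : 'I_k) :
  dot (\sum_(i < k) c i *: e i) (e j) = c j.
Proof.
rewrite dot_suml (bigD1 j) //= big1 => [|i /negPf ij].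
  by rewrite dotZl e_on // eqxx mulr1 addr0.
by rewrite dotZl e_on // [(i : nat) == j]ij mulr0.
Qed.

Lemma dot_lincomb (c c' : 'I_k -> R) :
  dot (\sum_(i < k) c i *: e i) (\sum_(i < k) c' i *: e i) =
  \sum_(i < k) c i * c' i.
Proof.
rewrite dotC dot_suml; apply: eq_bigr => i _.
by rewrite dotZl dotC dot_lincomb_basis mulrC.
Qed.

Lemma dot_proj_basis x j : (j < k)%N -> dot (proj k e x) (e j) = dot x (e j).
Proof. by move=> jk; rewrite (dot_lincomb_basis _ (Ordinal jk)). Qed.

Lemma dot_subproj_basis x j : (j < k)%N -> dot (x - proj k e x) (e j) = 0.
Proof. by move=> jk; rewrite dotBl dot_proj_basis // subrr. Qed.

End Orthonormal.

Lemma proj0 k e : proj k e 0 = 0.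
Proof. by rewrite /proj big1 // => i _; rewrite dot0l scale0r. Qed.

Lemma projD k e x y : proj k e (x + y) = proj k e x + proj k e y.
Proof. by rewrite /proj -big_split; apply: eq_bigr => i _; rewrite dotDl scalerDl. Qed.

Lemma projZ k e a x : proj k e (a *: x) = a *: proj k e x.
Proof.
by rewrite /proj scaler_sumr; apply: eq_bigr => i _; rewrite dotZl scalerA.
Qed.

Lemma memv_proj k e (Z : {vspace 'rV[R]_n}) x :
  (forall i, (i < k)%N -> e i \in Z) -> proj k e x \in Z.
Proof. by move=> eZ; apply: memv_suml => i _; rewrite memvZ ?eZ. Qed.

Definition extend k (e : nat -> 'rV[R]_n) v i := if i == k then v else e i.

Lemma orthonormal_extend k e v : orthonormal_upto k e -> dot v v = 1 ->
  (forall j, (j < k)%N -> dot v (e j) = 0) -> orthonormal_upto k.+1 (extend k e v).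
Proof.
move=> e_on v1 ve i j; rewrite /extend !ltnS.
rewrite leq_eqVlt => /predU1P [->|ik]; rewrite leq_eqVlt => /predU1P [->|jk].
- by rewrite eqxx v1.
- by rewrite eqxx (ltn_eqF jk) /= ve // eq_sym (ltn_eqF jk).
- by rewrite eqxx (ltn_eqF ik) /= dotC ve // (ltn_eqF ik).
- by rewrite (ltn_eqF ik) (ltn_eqF jk) /= e_on.
Qed.

Lemma proj_extend k e v y :
  proj k.+1 (extend k e v) y = proj k e y + dot y v *: v.
Proof.
rewrite /proj big_ord_recr /= /extend eqxx; congr (_ + _).
by apply: eq_bigr => i _; rewrite ltn_eqF.
Qed.

Lemma gram_schmidt (Z : {vspace 'rV[R]_n}) (b : seq 'rV[R]_n) :
  all (mem Z) b ->
  exists k (e : nat -> 'rV[R]_n), [/\ (k <= size b)%N, orthonormal_upto k e,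
    (forall i, (i < k)%N -> e i \in Z) & forall x, x \in b -> proj k e x = x].
Proof.
elim: b => [_|x b IH] /=; first by exists 0%N, (fun=> 0); split => // i j.
case/andP=> xZ /IH [k [e [kb e_on eZ projb]]].
set w := x - proj k e x.
have w_ortho j : (j < k)%N -> dot w (e j) = 0 by exact: dot_subproj_basis.
have [w0|wN0] := eqVneq w 0.
  exists k, e; split => //; first exact: leqW.
  move=> y; rewrite inE => /predU1P [->|/projb //].
  by apply/eqP; rewrite eq_sym -subr_eq0 -/w w0.
have ww_gt0 : 0 < dot w w by rewrite lt_def dot_eq0 wN0 dot_ge0.
pose r := Num.sqrt (dot w w).
have r_gt0 : 0 < r by rewrite sqrtr_gt0.
have rr : r * r = dot w w by rewrite -expr2 sqr_sqrtr ?dot_ge0.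
pose v := r^-1 *: w.
have vv : dot v v = 1 by rewrite dotZl dotZr -rr; field; rewrite gt_eqF.
have v_ortho j : (j < k)%N -> dot v (e j) = 0.
  by move=> jk; rewrite dotZl w_ortho // mulr0.
have proj_v y : dot (proj k e y) v = 0.
  by rewrite dot_suml big1 // => i _; rewrite dotZl (dotC (e i)) v_ortho ?mulr0.
exists k.+1, (extend k e v); split => //; first exact: orthonormal_extend.
  move=> i; rewrite ltnS leq_eqVlt /extend => /predU1P [->|ik].
    by rewrite eqxx memvZ // memvB // memv_proj.
  by rewrite ltn_eqF // eZ.
move=> y; rewrite inE proj_extend => /predU1P [->|yb].
  have xv : dot x v = r.
    rewrite -[x in dot x](subrK (proj k e x)) -/w dotDl proj_v addr0.
    by rewrite dotZr -rr; field; rewrite gt_eqF.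
  by rewrite xv scalerA divff ?gt_eqF // scale1r subrKC.
by rewrite -{2}(projb y yb) proj_v scale0r addr0 projb.
Qed.

Lemma orthonormal_basis (Z : {vspace 'rV[R]_n}) :
  exists k (e : nat -> 'rV[R]_n), [/\ (k <= \dim Z)%N, orthonormal_upto k e,
    (forall i, (i < k)%N -> e i \in Z) & forall x, x \in Z -> proj k e x = x].
Proof.
have [|k [e [kb e_on eZ projb]]] := @gram_schmidt Z (vbasis Z).
  by apply/allP => x /vbasis_mem.
exists k, e; split => //; first by rewrite size_tuple in kb.
move=> x /coord_vbasis ->.
rewrite (big_morph _ (projD k e) (proj0 k e)); apply: eq_bigr => i _.
by rewrite projZ projb // mem_nth // size_tuple.
Qed.

End Euclid.

Lemma perturb_nonzero (R : realType) (I : finType) (a b : I -> R) (t0 : R) :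
  0 < t0 -> (forall i, b i != 0) ->
  exists t, [/\ 0 < t, t <= t0 & forall i, a i + t * b i != 0].
Proof.
move=> t0_gt0 b_neq0.
suff [t1 t1_gt0 t1P] : exists2 t1, 0 < t1 & forall t, 0 < t <= t1 ->
    forall i, i \in enum I -> a i + t * b i != 0.
  exists (Num.min t0 t1); rewrite lt_min t0_gt0 t1_gt0 ge_min lexx; split => // i.
  by rewrite t1P ?mem_enum // lt_min t0_gt0 t1_gt0 ge_min lexx orbT.
elim: (enum I) => [|x s [t1 t1_gt0 IH]]; first by exists 1.
have [ax0|axN0] := eqVneq (a x) 0.
  exists t1 => // t /andP [t_gt0 t_le] i; rewrite inE => /predU1P [->|/IH].
    by rewrite ax0 add0r mulf_eq0 negb_or gt_eqF ?b_neq0.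
  by apply; rewrite t_gt0.
have bx_gt0 : 0 < `|b x| by rewrite normr_gt0.
have ax_gt0 : 0 < `|a x| by rewrite normr_gt0.
exists (Num.min t1 (`|a x| / (2 * `|b x|))).
  by rewrite lt_min t1_gt0 divr_gt0 ?mulr_gt0.
move=> t /andP [t_gt0]; rewrite le_min => /andP [t_le1 t_le2] i.
rewrite inE; case/predU1P => [->|/IH]; last by apply; rewrite t_gt0.
apply: contraTneq t_le2 => /eqP; rewrite addr_eq0 => /eqP ax.
have ax_norm : `|a x| = t * `|b x| by rewrite ax normrN normrM gtr0_norm.
by rewrite -ltNge ltr_pdivrMr ?mulr_gt0 // ax_norm; nra.
Qed.

Lemma grid_cell (R : realType) (lo d x : R) (K : nat) : 0 < d -> (0 < K)%N ->
  lo <= x <= lo + K%:R * d ->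
  exists j : 'I_K, lo + j%:R * d <= x <= lo + j.+1%:R * d.
Proof.
move=> d_gt0; elim: K => [//|K IH] _ /andP [lo_x xK].
have [K0|K_gt0] := posnP K.
  by exists ord0; rewrite /= mul0r addr0 lo_x -K0.
have [xK'|xK'] := leP x (lo + K%:R * d).
  by have [j hj] := IH K_gt0 (introT andP (conj lo_x xK')); exists (widen_ord (leqnSn K) j).
by exists ord_max; rewrite /= xK ltW.
Qed.

Section GridPoints.
Variables (R : realType) (n k : nat) (e : nat -> 'rV[R]_n).
Hypothesis e_on : orthonormal_upto k e.

Definition grid_point K (d : R) (f : {ffun 'I_k -> 'I_K}) :=
  \sum_(i < k) (-1 + (f i)%:R * d) *: e i.

Lemma grid_point_approx K d z : 0 < d -> 2 <= K%:R * d ->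
  proj k e z = z -> dot z z = 1 ->
  exists f : {ffun 'I_k -> 'I_K},
    dot (z - grid_point d f) (z - grid_point d f) <= k%:R * d ^+ 2.
Proof.
move=> d_gt0 Kd z_proj zz.
pose t (i : 'I_k) := dot z (e i).
have t_sqr_le1 i : t i ^+ 2 <= 1.
  have : \sum_(i < k) t i * t i = 1 by rewrite -zz -{1 2}z_proj dot_lincomb.
  move=> <-; rewrite (bigD1 i) //= expr2 lerDl.
  by apply: sumr_ge0 => j _; rewrite -expr2 sqr_ge0.
have cell i : exists j : 'I_K, -1 + j%:R * d <= t i <= -1 + j.+1%:R * d.
  apply: grid_cell => //.
    by rewrite lt0n; apply: contraTneq Kd => ->; rewrite mul0r -ltNge ltr0n.
  by have := t_sqr_le1 i; apply: contraTT; rewrite negb_and -!ltNge; nra.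
have [f0 f0P] := fin_all_exists cell.
exists [ffun i => f0 i].
have -> : z - grid_point d [ffun i => f0 i] =
    \sum_(i < k) (t i - (-1 + (f0 i)%:R * d)) *: e i.
  rewrite -{1}z_proj /grid_point -sumrB.
  by apply: eq_bigr => i _; rewrite ffunE scalerBl.
have -> : k%:R * d ^+ 2 = \sum_(i < k) d ^+ 2 by rewrite sumr_const card_ord mulr_natl.
rewrite dot_lincomb //; apply: ler_sum => i _.
have := f0P i; rewrite -natr1 mulrDl mul1r; nra.
Qed.

End GridPoints.

Lemma unit_vector_dimv_gt0 (R : realType) (n : nat) (Z : {vspace 'rV[R]_n}) z :
  z \in Z -> enorm z = 1 -> (0 < \dim Z)%N.
Proof.
move=> zZ z1; rewrite lt0n dimv_eq0; apply/eqP => Z0; move: zZ z1.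
by rewrite Z0 memv0 => /eqP -> /eqP; rewrite enormE dot0l sqrtr0 eq_sym oner_eq0.
Qed.

Lemma grid_resolution (R : realType) (m k : nat) (eps : R) :
  (0 < k)%N -> 0 < eps <= 1 -> 10 * eps^-1 * k%:R <= m%:R ->
  exists K (d : R),
    [/\ 0 < d, 2 <= K%:R * d, k%:R * d ^+ 2 <= eps ^+ 2 / 4 & (K <= m ^ 2)%N].
Proof.
move=> k_gt0 /andP [eps_gt0 eps_le1] mk.
have k_ge1 : 1 <= k%:R :> R by rewrite ler1n.
pose q := k%:R / eps.
have q_ge1 : 1 <= q by rewrite ler_pdivlMr // mul1r (le_trans eps_le1).
have q_gt0 : 0 < q by apply: lt_le_trans q_ge1.
have mq : 10 * q <= m%:R by rewrite /q (mulrC k%:R) mulrA.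
pose K := (Num.truncn (4 * q)).+1.
have K_gt : 4 * q < K%:R by apply: truncnS_gt.
have K_le : K%:R <= 4 * q + 1.
  by rewrite -[K%:R]natr1 lerD2r truncn_le mulr_ge0 // ltW.
exists K, (eps / (2 * k%:R)); split.
- by rewrite divr_gt0 ?mulr_gt0 // (lt_le_trans ltr01).
- have -> : K%:R * (eps / (2 * k%:R)) = K%:R / (2 * q).
    by rewrite /q; field; rewrite !gt_eqF // (lt_le_trans ltr01).
  by rewrite ler_pdivlMr; [lra | rewrite mulr_gt0].
- have -> : k%:R * (eps / (2 * k%:R)) ^+ 2 = eps ^+ 2 / 4 / k%:R.
    by field; rewrite gt_eqF // (lt_le_trans ltr01).
  by rewrite ler_pdivrMr ?(lt_le_trans ltr01) // ler_peMr // divr_ge0 ?sqr_ge0.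
- rewrite -(ler_nat R) natrX expr2; apply: (le_trans K_le).
  apply: le_trans (_ : m%:R <= _); first lra.
  by rewrite ler_peMl //; lra.
Qed.

Lemma sphere_net_avoiding (R : realType) (n m k : nat) (Z : {vspace 'rV[R]_n})
    (eps : R) (a : 'I_m -> 'rV[R]_n) (v : 'rV[R]_n) :
  \dim Z = k -> (0 < k)%N -> 0 < eps <= 1 -> 10 * eps^-1 * k%:R <= m%:R ->
  v \in Z -> (forall l, dot (a l) v != 0) ->
  exists Z0 : seq 'rV[R]_n,
    [/\ forall z0, z0 \in Z0 -> z0 \in Z /\ (forall l, dot (a l) z0 != 0),
        uniq Z0 /\ (size Z0 <= 10 * m ^ (2 * k))%N
      & forall z, z \in Z -> enorm z = 1 ->
          exists2 z0, z0 \in Z0 & enorm (z - z0) <= eps].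
Proof.
move=> dimZ k_gt0 eps01 mk vZ av.
have [K [d [d_gt0 Kd kd2 K_le_m2]]] := grid_resolution k_gt0 eps01 mk.
have /andP [eps_gt0 _] := eps01.
have [k' [e [k'k e_on eZ e_proj]]] := orthonormal_basis Z; rewrite dimZ in k'k.
pose g (f : {ffun 'I_k' -> 'I_K}) := grid_point e d f.
have gZ f : g f \in Z by apply: memv_suml => i _; rewrite memvZ ?eZ.
have vv_ge0 := dot_ge0 v.
have t0_gt0 : 0 < eps / (2 * (1 + dot v v)) by rewrite divr_gt0 ?mulr_gt0 ?ltr_wpDr.
have [tau [tau_gt0 tau_le tau_avoid]] :=
  perturb_nonzero (fun p : 'I_m * {ffun 'I_k' -> 'I_K} => dot (a p.1) (g p.2))
    t0_gt0 (fun p => av p.1).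
have tau_v : tau ^+ 2 * dot v v <= eps ^+ 2 / 4.
  pose x := tau * (1 + dot v v).
  have x_ge0 : 0 <= x by rewrite /x; nra.
  have x_le : 2 * x <= eps by rewrite /x mulrCA -ler_pdivlMr ?mulr_gt0 ?ltr_wpDr.
  have : tau ^+ 2 * dot v v <= x ^+ 2.
    by rewrite exprMn ler_wpM2l ?sqr_ge0 //; nra.
  rewrite ler_pdivlMr //; nra.
pose h f := g f + tau *: v.
exists (undup [seq h f | f <- enum {ffun 'I_k' -> 'I_K}]); split.
- move=> z0; rewrite mem_undup => /mapP [f _ ->]; split; first by rewrite memvD ?memvZ.
  by move=> l; rewrite dotDr dotZr (tau_avoid (l, f)).
- split; first exact: undup_uniq.
  rewrite (leq_trans (size_undup _)) // size_map -cardE card_ffun !card_ord expnM.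
  have m2_gt0 : (0 < m ^ 2)%N.
    by rewrite expn_gt0 -(ltr0n R) (lt_le_trans _ mk) // !mulr_gt0 ?invr_gt0 ?ltr0n.
  apply: (@leq_trans ((m ^ 2) ^ k')).
    by have [->|k'_gt0] := posnP k'; [rewrite !expn0 | rewrite leq_exp2r].
  exact: leq_trans (leq_pexp2l m2_gt0 k'k) (leq_pmull _ _).
move=> z zZ z1.
have zz : dot z z = 1 by rewrite -[dot z z]sqr_sqrtr ?dot_ge0 // -enormE z1 expr1n.
have [f zf] := grid_point_approx e_on d_gt0 Kd (e_proj z zZ) zz.
exists (h f); first by rewrite mem_undup map_f ?mem_enum.
have zg : dot (z - g f) (z - g f) <= eps ^+ 2 / 4.
  by rewrite (le_trans zf) // (le_trans _ kd2) // ler_wpM2r ?sqr_ge0 ?ler_nat.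
rewrite enormE -(ger0_norm (ltW eps_gt0)) -sqrtr_sqr ler_wsqrtr //.
have -> : z - h f = (z - g f) - tau *: v by rewrite /h opprD addrA.
apply: (le_trans (dot_subr_le _ _)); rewrite dotZl dotZr [tau * (tau * _)]mulrA -expr2.
lra.
Qed.

Lemma measurable_preimageT d d' (aT : measurableType d) (rT : measurableType d')
    (f : aT -> rT) (Y : set rT) :
  measurable_fun setT f -> measurable Y -> measurable (f @^-1` Y).
Proof. by move=> mf mY; rewrite -[f @^-1` _]setTI; exact: mf. Qed.

Lemma measurable_abs_ge (R : realType) (M : R) : measurable [set x : R | M <= `|x|].
Proof.
have -> : [set x : R | M <= `|x|] = Num.norm @^-1` `[M, +oo[.
  by apply/seteqP; split => x /=; rewrite in_itv /= andbT.
by apply: measurable_preimageT; [exact: normr_measurable | exact: measurable_itv].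
Qed.

Lemma measure_le_sum_cover d (T : measurableType d) (R : realType)
    (mu : {measure set T -> \bar R}) (I : finType) (F : I -> set T) (A : set T) :
  measurable A -> (forall i, measurable (F i)) -> A `<=` \bigcup_i F i ->
  (mu A <= \sum_i mu (F i))%E.
Proof.
move=> mA mF AF; rewrite -big_enum fsbig_seq ?enum_uniq //.
have -> : [set` enum I] = setT by apply/seteqP; split=> // i _; rewrite /= mem_enum.
apply: content_sub_fsum => //; exact: finite_finset.
Qed.

Lemma normal_prob_itv_le (R : realType) (mu s a b : R) : s != 0 -> a <= b ->
  (normal_prob mu s `[a, b] <= (normal_peak s * (b - a))%:E)%E.
Proof.
move=> s_neq0 ab.
apply: (@le_trans _ _ (\int[lebesgue_measure]_(x in `[a, b]) (normal_peak s)%:E))%E.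
  apply: ge0_le_integral => //=.
  - by move=> x _; rewrite lee_fin normal_pdf_ge0.
  - apply: (@measurable_funS _ _ _ _ setT) => //.
    by apply/measurable_EFinP; exact: measurable_normal_pdf.
  - by move=> x _; rewrite lee_fin normal_pdf_ub.
rewrite integral_cst //= lebesgue_measure_itv /=.
case: ifP => _; first by rewrite -EFinB -EFinM.
by rewrite mule0 lee_fin mulr_ge0 ?normal_peak_ge0 // subr_ge0.
Qed.

Section Tails.
Context d (T : measurableType d) (R : realType) (P : probability T R).

Lemma prob_abs_ge_small (X : T -> R) : measurable_fun setT X ->
  forall e, 0 < e ->
  \forall k \near \oo, (P (X @^-1` [set x | (k%:R <= `|x|)%R]) <= e%:E)%E.
Proof.
move=> mX e e_gt0.
pose F k := X @^-1` [set x : R | k%:R <= `|x|].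
have mF k : measurable (F k) by apply: measurable_preimageT => //; exact: measurable_abs_ge.
have F_cap : \bigcap_k F k = set0.
  apply/seteqP; split => // w /(_ (Num.truncn `|X w|).+1 I) /=.
  by rewrite /F /= leNgt truncnS_gt.
have F_noninc : nonincreasing_seq F.
  by move=> i j ij; apply/subsetPset => w /=; apply: le_trans; rewrite ler_nat.
have := nonincreasing_cvg_mu (le_lt_trans (probability_le1 P (mF 0%N)) (ltry _)) mF
  _ F_noninc.
rewrite F_cap measure0 => /(_ measurable0) /fine_cvgP [Ffin /cvgr_lt /(_ e e_gt0)].
by apply: filterS2 Ffin => k /= Pk; rewrite -(fineK Pk) lee_fin => /ltW.
Qed.

End Tails.

Lemma lee_prod_nneg (R : realType) (I : Type) (s : seq I) (P : pred I)
    (f g : I -> \bar R) :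
  (forall i, P i -> (0 <= f i <= g i)%E) ->
  (\prod_(i <- s | P i) f i <= \prod_(i <- s | P i) g i)%E.
Proof.
move=> fg; suff /andP [] : (0 <= \prod_(i <- s | P i) f i <= \prod_(i <- s | P i) g i)%E by [].
apply: (big_ind2 (fun x y => 0 <= x <= y)%E) => // [|x1 x2 y1 y2].
  by rewrite lee01 lexx.
move=> /andP [x1_ge0 x12] /andP [y1_ge0 y12].
by rewrite mule_ge0 // lee_pmul.
Qed.

Section NullHyperplane.
Context d (T : measurableType d) (R : realType) (P : probability T R).
Variables (n : nat) (X : 'I_n -> T -> R) (c : R).
Hypothesis mX : forall j, measurable_fun setT (X j).
Hypothesis X_indep : forall S : 'I_n -> set R, (forall j, measurable (S j)) ->
  P [set w | forall j, S j (X j w)] = (\prod_j P (X j @^-1` S j))%E.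
Hypothesis X_itv : forall j a b, a <= b ->
  (P (X j @^-1` `[a, b]) <= (c * (b - a))%:E)%E.
Variables (z : 'I_n -> R) (j0 : 'I_n).
Hypothesis z_j0 : z j0 != 0.

Let L := (\sum_j `|z j|) / `|z j0|.
Let L_ge0 : 0 <= L. Proof. by apply: divr_ge0 => //; exact: sumr_ge0. Qed.

Let c_ge0 : 0 <= c.
Proof.
have := le_trans (measure_ge0 P _) (X_itv j0 ler01).
by rewrite subr0 mulr1 lee_fin.
Qed.

Section Boxes.
Variables (M : R) (N : nat).
Hypothesis M_gt0 : 0 < M.

Let delta := 2 * M / N.+1%:R.
Let delta_gt0 : 0 < delta. Proof. by rewrite divr_gt0 ?mulr_gt0. Qed.

Let Ldelta_ge0 : 0 <= L * delta. Proof. by rewrite mulr_ge0 // ltW. Qed.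

Let cell (i : nat) : set R := `[-M + i%:R * delta, -M + i.+1%:R * delta].

Let center (f : {ffun 'I_n -> 'I_N.+1}) :=
  - (\sum_(j < n | j != j0) z j * (-M + (f j)%:R * delta)) / z j0.

(* The coordinate [j0] is not discretised: it is confined to the window of
   half-width [L * delta] around the value forced by the hyperplane, and
   [f j0] is a dummy index (boxes with [f j0 != ord0] are empty). *)
Let box (f : {ffun 'I_n -> 'I_N.+1}) (j : 'I_n) : set R :=
  if j == j0 then
    if f j0 == ord0 then [set` `[center f - L * delta, center f + L * delta]] else set0
  else cell (f j).

Let hyperplane_cover (x : 'I_n -> R) : (forall j, `|x j| < M) ->
  \sum_j x j * z j = 0 -> exists f, forall j, box f j (x j).
Proof.
move=> x_lt x_hyp.
have cellP j : exists i : 'I_N.+1, -M + i%:R * delta <= x j <= -M + i.+1%:R * delta.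
  apply: grid_cell => //.
  have -> : N.+1%:R * delta = 2 * M by rewrite /delta mulrC divfK ?pnatr_eq0.
  by have := x_lt j; rewrite ltr_norml => /andP [] *; apply/andP; split; lra.
have [g gP] := fin_all_exists cellP.
pose f := [ffun j => if j == j0 then ord0 else g j].
exists f => j; rewrite /box ffunE.
have [{j}->|jj0] := eqVneq j j0; last by rewrite /cell /= in_itv ffunE (negPf jj0) gP.
rewrite eqxx /= in_itv /= -ler_distl.
pose a j := -M + (g j)%:R * delta.
pose S := \sum_(j < n | j != j0) z j * (x j - a j).
have center_f : center f = - (\sum_(j < n | j != j0) z j * a j) / z j0.
  by congr (- _ / _); apply: eq_bigr => i /negPf ij0; rewrite ffunE ij0.
have x_center : x j0 - center f = - S / z j0.
  have xz : x j0 * z j0 = - \sum_(j < n | j != j0) x j * z j.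
    by move: x_hyp; rewrite (bigD1 j0) //= => /eqP; rewrite addr_eq0 => /eqP.
  have S_eq : S = \sum_(i < n | i != j0) x i * z i - \sum_(i < n | i != j0) z i * a i.
    by rewrite /S -sumrB; apply: eq_bigr => i _; rewrite mulrBr mulrC.
  by rewrite center_f S_eq -[\sum_(i < n | i != j0) x i * z i]opprK -xz; field.
rewrite x_center normrM normrN normfV /L mulrAC.
apply: ler_wpM2r; first by rewrite invr_ge0.
apply: (le_trans (ler_norm_sum _ _ _)).
apply: (@le_trans _ _ (\sum_(i < n | i != j0) `|z i| * delta)).
  apply: ler_sum => i _; rewrite normrM; apply: ler_wpM2l => //.
  have := gP i; rewrite /a -natr1 mulrDl mul1r => /andP [lo hi].
  by rewrite ger0_norm; lra.
rewrite -mulr_suml; apply: ler_wpM2r; first exact: ltW.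
by rewrite [X in _ <= X](bigD1 j0) //= lerDr.
Qed.

Let box_measurable f j : measurable (box f j).
Proof.
rewrite /box /cell; case: ifP => _; last exact: measurable_itv.
by case: ifP => _; [exact: measurable_itv | exact: measurable0].
Qed.

Let q (j : 'I_n) (i : 'I_N.+1) : R :=
  if j == j0 then (if i == ord0 then c * (2 * (L * delta)) else 0) else c * delta.

Let prob_box_le f :
  (P [set w | forall j, box f j (X j w)] <= (\prod_j q j (f j))%:E)%E.
Proof.
rewrite X_indep // -prodEFin; apply: lee_prod_nneg => j _; rewrite measure_ge0 /=.
rewrite /box /q; case: eqVneq => [{j}->|_]; last first.
  apply: (le_trans (X_itv _ _)); first by rewrite lerD2l ler_pM2r // ler_nat.
  by rewrite lee_fin -natr1 mulrDl mul1r; apply: ler_wpM2l => //; lra.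
case: eqVneq => _; last by rewrite preimage_set0 measure0.
have Ld_ge0 := Ldelta_ge0.
apply: (le_trans (X_itv _ _)); first lra.
by rewrite lee_fin; apply: ler_wpM2l => //; lra.
Qed.

Let sum_prob_box_le :
  (\sum_f P [set w | forall j, box f j (X j w)] <=
   (c * (2 * (L * delta)) * \prod_(j | j != j0) (2 * M * c))%:E)%E.
Proof.
apply: (@le_trans _ _ (\sum_(f : {ffun 'I_n -> 'I_N.+1}) (\prod_j q j (f j))%:E)%E).
  by apply: lee_sum => f _; exact: prob_box_le.
rewrite sumEFin lee_fin -bigA_distr_bigA (bigD1 j0) //=.
have -> : \sum_(i < N.+1) q j0 i = c * (2 * (L * delta)).
  by rewrite (bigD1 ord0) //= big1 ?addr0 => [|i /negPf i0]; rewrite /q eqxx // i0.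
apply: ler_wpM2l; first by apply: mulr_ge0 => //; apply: mulr_ge0.
rewrite (eq_bigr (fun=> 2 * M * c)) // => j /negPf jj0; rewrite /q jj0 sumr_const card_ord.
by rewrite -[_ *+ N.+1]mulr_natr -mulrA /delta divfK ?pnatr_eq0 // mulrC.
Qed.

Lemma prob_hyperplane_le :
  (P [set w | (\sum_j X j w * z j = 0)%R] <=
   \sum_j P (X j @^-1` [set x | (M <= `|x|)%R]) +
   (c * (2 * (L * delta)) * \prod_(j | j != j0) (2 * M * c))%:E)%E.
Proof.
pose tail j := X j @^-1` [set x | M <= `|x|].
pose piece (p : 'I_n + {ffun 'I_n -> 'I_N.+1}) := match p with
  | inl j => tail j
  | inr f => [set w | forall j, box f j (X j w)] end.
have m_tail j : measurable (tail j).
  by apply: measurable_preimageT => //; exact: measurable_abs_ge.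
have m_box f : measurable [set w | forall j, box f j (X j w)].
  rewrite [X in measurable X](_ : _ = \bigcap_j (X j @^-1` box f j)).
    by apply: fin_bigcap_measurable => // j _; exact: measurable_preimageT.
  by apply/seteqP; split => [w Hw j _|w Hw j]; [exact: Hw | exact: Hw j I].
have m_hyp : measurable [set w | \sum_j X j w * z j = 0].
  apply: (measurable_preimageT (f := fun w => \sum_j X j w * z j) (Y := [set 0])).
  by apply: measurable_sum => j; apply: measurable_funM.
  exact: measurable_set1.
apply: le_trans (measure_le_sum_cover P (F := piece) m_hyp _ _) _.
- by case.
- move=> w /= hyp_w.
  have [[j Mj]|no_tail] := pselect (exists j, M <= `|X j w|).
    by exists (inl j).
  have [|f fw] := hyperplane_cover (x := fun j => X j w) _ hyp_w.
    by move=> j; rewrite ltNge; apply/negP => Mj; apply: no_tail; exists j.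
  by exists (inr f).
by rewrite big_sumType /=; apply: leeD2l; exact: sum_prob_box_le.
Qed.

End Boxes.

Lemma prob_lincomb_eq0 : P [set w | \sum_j X j w * z j = 0] = 0%E.
Proof.
apply/eqP; rewrite eq_le measure_ge0 andbT; apply/lee_addgt0Pr => e e_gt0.
rewrite add0e.
pose e1 := e / n.+1%:R.
have e1_gt0 : 0 < e1 by rewrite divr_gt0.
have [K _ tailK] : \forall k \near \oo, forall j,
    (P (X j @^-1` [set x | (k%:R <= `|x|)%R]) <= e1%:E)%E.
  by apply: filter_forall => j; exact: prob_abs_ge_small.
pose M : R := K.+1%:R.
have M_gt0 : 0 < M by rewrite ltr0Sn.
pose C := c * (2 * L) * (2 * M) * \prod_(j | j != j0) (2 * M * c).
pose N := Num.truncn (C / e1).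
apply: le_trans (prob_hyperplane_le N M_gt0) _.
apply: (@le_trans _ _ (\sum_(j < n) e1%:E + e1%:E)%E).
  apply: leeD.
    by apply: lee_sum => j _; exact: tailK K.+1 (leqnSn K) j.
  rewrite lee_fin; apply: ltW.
  have -> : c * (2 * (L * (2 * M / N.+1%:R))) * \prod_(j | j != j0) (2 * M * c) =
      C / N.+1%:R by rewrite /C; field; rewrite addrC natr1 pnatr_eq0.
  by rewrite ltr_pdivrMr // mulrC -ltr_pdivrMr // truncnS_gt.
rewrite sumEFin -EFinD lee_fin sumr_const card_ord -mulrSr -[_ *+ n.+1]mulr_natr.
by rewrite /e1 divfK ?pnatr_eq0.
Qed.

End NullHyperplane.

Section GaussianMatrix.
Context d (T : measurableType d) (R : realType) (P : probability T R).
Variables (m n : nat) (A : 'I_m -> 'I_n -> T -> R).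
Hypothesis m_gt0 : (0 < m)%N.
Hypothesis A_gauss : gaussian_entries P A.
Hypothesis A_indep : mutually_independent_entries P A.

Let row_indep l (S : 'I_n -> set R) : (forall j, measurable (S j)) ->
  P [set w | forall j, S j (A l j w)] = (\prod_j P (A l j @^-1` S j))%E.
Proof.
move=> mS; pose B l' j := if l' == l then S j else setT.
have -> : [set w | forall j, S j (A l j w)] = [set w | forall l' j, B l' j (A l' j w)].
  apply/seteqP; split => w /= Sw; last by move=> j; have := Sw l j; rewrite /B eqxx.
  by move=> l' j; rewrite /B; case: eqP => // ->.
rewrite A_indep => [|l' j]; last by rewrite /B; case: eqP.
rewrite (bigD1 l) //= [X in (_ * X)%E]big1 ?mule1 => [|l' /negPf l'l].
  by apply: eq_bigr => j _; rewrite /B eqxx.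
by rewrite big1 // => j _; rewrite /B l'l preimage_setT probability_setT.
Qed.

Lemma prob_gaussian_row_lincomb_eq0 l (z : 'I_n -> R) j0 : z j0 != 0 ->
  P [set w | \sum_j A l j w * z j = 0] = 0%E.
Proof.
have s_neq0 : Num.sqrt m%:R^-1 != 0 :> R.
  by rewrite gt_eqF // sqrtr_gt0 invr_gt0 ltr0n.
apply: (prob_lincomb_eq0 (c := normal_peak (Num.sqrt m%:R^-1))).
- by move=> j; case: (A_gauss l j).
- exact: row_indep.
- by move=> j a b ab; rewrite (A_gauss l j).2 ?normal_prob_itv_le.
Qed.

Lemma gaussian_rows_nonorthogonal (v : 'rV[R]_n) : v != 0 ->
  measurable [set w | forall l, \sum_j A l j w * v 0 j != 0] /\
  P [set w | forall l, \sum_j A l j w * v 0 j != 0] = 1%E.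
Proof.
move=> vN0.
have [j0 vj0] : exists j0, v 0 j0 != 0.
  apply/existsP; apply: contraR vN0 => /existsPn v0.
  by apply/eqP/rowP => j; rewrite mxE; apply/eqP; rewrite -[_ == _]negbK v0.
pose bad l := [set w | \sum_j A l j w * v 0 j = 0].
have m_bad l : measurable (bad l).
  apply: (measurable_preimageT (f := fun w => \sum_j A l j w * v 0 j) (Y := [set 0])).
    by apply: measurable_sum => j; apply: measurable_funM => //; case: (A_gauss l j).
  exact: measurable_set1.
have F_eq : [set w | forall l, \sum_j A l j w * v 0 j != 0] = ~` \bigcup_l bad l.
  apply/seteqP; split => w /=; first by move=> Fw [l _ /eqP]; apply/negP/Fw.
  by move=> nbad l; apply/eqP => bw; apply: nbad; exists l.
have m_cup : measurable (\bigcup_l bad l).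
  by apply: fin_bigcup_measurable => // l _; exact: m_bad.
rewrite F_eq; split; first exact: measurableC.
rewrite probability_setC // (_ : P _ = 0%E) ?sube0 //.
apply/eqP; rewrite eq_le measure_ge0 andbT.
apply: le_trans (measure_le_sum_cover P m_cup m_bad _) _ => //.
by rewrite big1 // => l _; exact: prob_gaussian_row_lincomb_eq0 vj0.
Qed.

End GaussianMatrix.

Unset Implicit Arguments.

Theorem lemma24 (R : realType) :
  exists C2 c K : R, exists p : nat,
    [/\ 0 < C2, 0 < c & 0 < K] /\
    forall (eps : R), 0 < eps < 1 ->
    forall (m n k : nat) (Z : {vspace 'rV[R]_n}), \dim Z = k ->
    forall (d : measure_display) (T : measurableType d) (P : probability T R)
      (A : 'I_m -> 'I_n -> T -> R),
      (0 < m)%N ->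
      gaussian_entries P A ->
      mutually_independent_entries P A ->
      K * eps ^- p * k%:R <= m%:R ->
      exists F : set T, [/\ measurable F, F `<=` event_EZA k eps Z A &
        (1 - C2 * expR (- c * eps * m%:R))%:E <= P F]%E.
Proof.
exists 1, 1, 10, 1%N; split => // eps /andP [eps_gt0 eps_lt1] m n k Z dimZ d T P A.
move=> m_gt0 A_gauss A_indep; rewrite expr1 => mk.
have PF_ge F : P F = 1%E -> ((1 - 1 * expR (- 1 * eps * m%:R))%:E <= P F)%E.
  by move=> ->; rewrite lee_fin mul1r gerBl expR_ge0.
have [k0|k_gt0] := posnP k.
  exists setT; split => //; last by apply: PF_ge; rewrite probability_setT.
  move=> w _; exists [::]; split => // z zZ /(unit_vector_dimv_gt0 zZ).
  by rewrite dimZ k0.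
pose v := vpick Z.
have vN0 : v != 0 by rewrite vpick0 -dimv_eq0 dimZ -lt0n.
have [mF PF] := gaussian_rows_nonorthogonal m_gt0 A_gauss A_indep vN0.
exists [set w | forall l, \sum_j A l j w * v 0 j != 0]; split => //; last exact: PF_ge.
move=> w Fw; pose a l := \row_j A l j w.
have dot_a l z : dot (a l) z = \sum_j mat_at A w l j * z 0 j.
  by apply: eq_bigr => j _; rewrite !mxE.
have av l : dot (a l) v != 0.
  by rewrite dot_a; under eq_bigr do rewrite mxE; exact: Fw l.
have eps01 : 0 < eps <= 1 by rewrite eps_gt0 ltW.
have [Z0 [Z0_avoid Z0_size Z0_net]] :=
  sphere_net_avoiding dimZ k_gt0 eps01 mk (memv_pick Z) av.
exists Z0; split => // z0 /Z0_avoid [z0Z z0_avoid]; split => // l.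
by rewrite -dot_a.
Qed.
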